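(* For every integer $k\geq1$, as identities of rational functions in the indeterminates $a,b,q$, $$\sum_{r=1}^{k}(-1)^{k-r}\sum_{\substack{k_1+\cdots+k_r=k\\ k_i\geq1}}\ \prod_{i=1}^{r}\prod_{j=1}^{k_i}\frac{a-bq^{j-1}}{1-q^j}=\prod_{i=1}^{k}\frac{aq^{i-1}-b}{1-q^i} \quad\text{and}\quad \sum_{r=1}^{k}(-1)^{k-r}\sum_{\substack{k_1+\cdots+k_r=k\\ k_i\geq1}}\ \prod_{i=1}^{r}\prod_{j=1}^{k_i}\frac{aq^{j-1}-b}{1-q^j}=\prod_{i=1}^{k}\frac{a-bq^{i-1}}{1-q^i},$$ where the inner sums run over all ordered $r$-tuples of positive integers with sum $k$. *)

From mathcomp Require Import all_boot all_algebra fraction.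
From mathcomp Require Import mpoly.
Set Implicit Arguments. Unset Strict Implicit. Unset Printing Implicit Defensive.
Import GRing.Theory.
Local Open Scope ring_scope.

Definition RF := {fraction {mpoly rat[3]}}.

Definition va : RF := tofrac ('X_(0 : 'I_3) : {mpoly rat[3]}).
Definition vb : RF := tofrac ('X_(1 : 'I_3) : {mpoly rat[3]}).
Definition vq : RF := tofrac ('X_(2 : 'I_3) : {mpoly rat[3]}).

Definition blockA (a b q : RF) (m : nat) : RF :=
  \prod_(1 <= j < m.+1) ((a - b * q ^+ (j - 1)) / (1 - q ^+ j)).

Definition blockB (a b q : RF) (m : nat) : RF :=
  \prod_(1 <= j < m.+1) ((a * q ^+ (j - 1) - b) / (1 - q ^+ j)).

Definition is_composition (k r : nat) (c : {ffun 'I_r -> 'I_k.+1}) : bool :=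
  [forall i, 0 < (c i : nat)]%N && (\sum_(i < r) (c i : nat) == k)%N.

Definition comp_sum (F : nat -> RF) (k : nat) : RF :=
  \sum_(1 <= r < k.+1)
    (-1) ^+ (k - r) *
    \sum_(c : {ffun 'I_r -> 'I_k.+1} | is_composition c)
      \prod_(i < r) F (c i : nat).

From mathcomp Require Import all_boot all_algebra fraction.
From mathcomp Require Import mpoly.
From mathcomp Require Import ring zify.
Import GRing.Theory.
Local Open Scope ring_scope.
Set Implicit Arguments. Unset Strict Implicit. Unset Printing Implicit Defensive.

(* Put g := F_1 x + ... + F_k x^k.  The inner sum over compositions into r
   parts is the coefficient of x^k in g^r, so the alternating sum is (-1)^k
   times the x^k-coefficient of sum_r (-g)^r, which inverts 1 + g modulo
   x^(k+1).  It therefore equals G_k as soon as (1 + g) * sum_i (-1)^i G_i x^i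
   is 1 modulo x^(k+1), i.e. sum_i F_i (-1)^(n-i) G_(n-i) = 0 for 0 < n <= k.
   For the two q-products this convolution telescopes, thanks to
   (a - b q^i)(1 - q^m) + (1 - q^i)(a q^m - b) = (a - b)(1 - q^(i+m));
   the condition is symmetric in the two products, giving both identities. *)

Lemma dvdp_XnP (R : idomainType) n (p : {poly R}) :
  reflect (forall i, (i < n)%N -> p`_i = 0) ('X^n %| p).
Proof.
have monXn : 'X^n \is monic := monicXn R n.
apply: (iffP (Pdiv.IdomainMonic.dvdpP monXn p)) => [[r ->] i lt_in|p_low].
  by rewrite coefMXn lt_in.
exists (drop_poly n p); rewrite -[LHS](poly_take_drop n).
suff -> : take_poly n p = 0 by rewrite add0r.
by apply/polyP => i; rewrite coef_take_poly coef0; case: ifP => // /p_low.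
Qed.

Lemma dvdp_sub_inverses (R : idomainType) (d u v w : {poly R}) :
  d %| u * v - 1 -> d %| u * w - 1 -> d %| v - w.
Proof.
move=> duv duw; have -> : v - w = w * (u * v - 1) - v * (u * w - 1) by ring.
by rewrite dvdp_sub ?dvdp_mull.
Qed.

Section CompositionSums.
Variable R : idomainType.

(* [comp_sum] over an arbitrary integral domain; convertible to it on [RF]. *)
Definition composition_sum (F : nat -> R) (k : nat) : R :=
  \sum_(1 <= r < k.+1)
    (-1) ^+ (k - r) *
    \sum_(c : {ffun 'I_r -> 'I_k.+1} | is_composition c)
      \prod_(i < r) F (c i : nat).

Definition pos_genpoly (F : nat -> R) (k : nat) : {poly R} :=
  \poly_(j < k.+1) (if (0 < j)%N then F j else 0).

Lemma sum_compositions_coef (F : nat -> R) k r :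
  \sum_(c : {ffun 'I_r -> 'I_k.+1} | is_composition c) \prod_(i < r) F (c i : nat)
  = (pos_genpoly F k ^+ r)`_k.
Proof.
set E := fun j : nat => if (0 < j)%N then F j else 0.
have -> : pos_genpoly F k ^+ r = \prod_(i < r) pos_genpoly F k.
  by rewrite prodr_const card_ord.
rewrite /pos_genpoly poly_def bigA_distr_bigA /=.
rewrite coef_sum big_mkcond /=; apply: eq_bigr => f _.
have -> : \prod_(i < r) (E (f i) *: 'X^(f i)) =
          (\prod_(i < r) E (f i)) *: 'X^(\sum_(i < r) (f i : nat)).
  rewrite -prodrXr -mul_polyC rmorph_prod -big_split /=.
  by apply: eq_bigr => i _; rewrite mul_polyC.
rewrite coefZ coefXn /is_composition.
have [f_pos|] := boolP [forall i, 0 < (f i : nat)]%N.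
  rewrite [in RHS](eq_bigr (fun i => F (f i))) => [|i _]; last first.
    by rewrite /E (forallP f_pos i).
  by rewrite eq_sym; case: eqP; rewrite ?mulr1 ?mulr0.
rewrite negb_forall => /existsP [i f_i0] /=.
by rewrite (bigD1 i) //= /E (negbTE f_i0) !mul0r.
Qed.

Lemma composition_sum_coef (F : nat -> R) k : (0 < k)%N ->
  composition_sum F k = (-1) ^+ k * (\sum_(r < k.+1) (- pos_genpoly F k) ^+ r)`_k.
Proof.
move=> k_gt0.
rewrite coef_sum -(big_mkord xpredT (fun r => ((- pos_genpoly F k) ^+ r)`_k)).
rewrite big_ltn // expr0 coef1 (gtn_eqF k_gt0) add0r mulr_sumr.
apply: eq_big_nat => r /andP [_ le_rk].
rewrite sum_compositions_coef -scaleN1r exprZn coefZ mulrA -exprD.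
have -> : (k + r = (k - r) + r * 2)%N by lia.
by rewrite exprD exprM sqrr_sign mulr1.
Qed.

Lemma composition_sum_inverse (F G : nat -> R) k :
  (0 < k)%N -> F 0%N = 1 -> G 0%N = 1 ->
  (forall n, (0 < n <= k)%N ->
     \sum_(i < n.+1) F i * ((-1) ^+ (n - i)%N * G (n - i)%N) = 0) ->
  composition_sum F k = G k.
Proof.
move=> k_gt0 F0 G0 convFG.
set g := pos_genpoly F k.
set S := \sum_(r < k.+1) (- g) ^+ r.
set P := \poly_(i < k.+1) ((-1) ^+ i * G i).
have coef_1g i : (i <= k)%N -> (1 + g)`_i = F i.
  move=> le_ik; rewrite coefD coef1 coef_poly ltnS le_ik.
  by case: i le_ik => [|i] _; rewrite ?F0 ?add0r ?addr0.
have invS : 'X^(k.+1) %| (1 + g) * S - 1.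
  have -> : (1 + g) * S - 1 = - (- g) ^+ k.+1.
    have -> : 1 + g = - (- g - 1) by rewrite opprB opprK.
    by rewrite mulNr -subrX1 opprB addrAC subrr add0r.
  rewrite dvdpNr; apply: dvdp_exp2r.
  rewrite dvdpNr -[X in X %| _]subr0 -polyC0 dvdp_XsubCl /root horner_coef0.
  by rewrite coef_poly.
have invP : 'X^(k.+1) %| (1 + g) * P - 1.
  apply/dvdp_XnP => n; rewrite ltnS => le_nk; rewrite coefB coef1 coefM.
  rewrite (eq_bigr (fun i : 'I_n.+1 => F i * ((-1) ^+ (n - i)%N * G (n - i)%N))); last first.
    move=> i _; have le_in : (i <= n)%N by rewrite -ltnS.
    by rewrite coef_1g ?(leq_trans le_in) // coef_poly ltnS (leq_trans (leq_subr _ _)).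
  have [->|n_gt0] := posnP n; first by rewrite big_ord1 F0 G0 !mul1r subrr.
  by rewrite convFG ?n_gt0 // subrr.
have /dvdp_XnP/(_ k (ltnSn k)) := dvdp_sub_inverses invS invP.
rewrite coefB => /eqP; rewrite subr_eq0 => /eqP S_P.
by rewrite composition_sum_coef // S_P coef_poly ltnSn signrMK.
Qed.

Lemma q_convolution_eq0 (X Y x y : nat -> R) (q c : R) n :
  (forall i, X i.+1 * (1 - q ^+ i.+1) = X i * x i) ->
  (forall i, Y i.+1 * (1 - q ^+ i.+1) = Y i * y i) ->
  (forall i m, x i * (1 - q ^+ m) + (1 - q ^+ i) * y m = c * (1 - q ^+ (i + m))) ->
  c * (1 - q ^+ n) != 0 ->
  \sum_(i < n.+1) X i * ((-1) ^+ (n - i)%N * Y (n - i)%N) = 0.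
Proof.
move=> recX recY mixxy cn_neq0.
(* Multiplied by [c (1 - q^n)], the [i]-th term becomes [W (i + 1) - W i]. *)
pose W i := (-1) ^+ (n.+1 - i) * (X i * (1 - q ^+ i)) *
            (Y (n.+1 - i)%N * (1 - q ^+ (n.+1 - i))).
have telescope_step i : (i <= n)%N ->
    c * (1 - q ^+ n) * (X i * ((-1) ^+ (n - i)%N * Y (n - i)%N)) = W i.+1 - W i.
  move=> le_in; rewrite /W subSS subSn // recX recY exprS.
  by rewrite -{1 3}(subnKC le_in) addKn -mixxy; ring.
apply/eqP; rewrite -(mulIr_eq0 _ (mulIf cn_neq0)) mulrC; apply/eqP.
rewrite big_distrr /= (eq_bigr (fun i : 'I_n.+1 => W i.+1 - W i)) => [|i _]; last first.
  by rewrite telescope_step // -ltnS.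
rewrite -(big_mkord xpredT (fun i => W i.+1 - W i)) telescope_sumr //.
by rewrite /W subnn subn0 !expr0 !subrr !mulr0 mul0r subrr.
Qed.

Lemma composition_sum_q_dual (X Y x y : nat -> R) (q c : R) k :
  (0 < k)%N -> X 0%N = 1 -> Y 0%N = 1 ->
  (forall i, X i.+1 * (1 - q ^+ i.+1) = X i * x i) ->
  (forall i, Y i.+1 * (1 - q ^+ i.+1) = Y i * y i) ->
  (forall i m, x i * (1 - q ^+ m) + (1 - q ^+ i) * y m = c * (1 - q ^+ (i + m))) ->
  (forall n, (0 < n <= k)%N -> c * (1 - q ^+ n) != 0) ->
  composition_sum X k = Y k /\ composition_sum Y k = X k.
Proof.
move=> k_gt0 X0 Y0 recX recY mixxy nz.
have mixyx i m : y i * (1 - q ^+ m) + (1 - q ^+ i) * x m = c * (1 - q ^+ (i + m)).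
  by rewrite addnC -mixxy; ring.
split; apply: composition_sum_inverse => // n /nz cn_neq0.
- exact: q_convolution_eq0 recX recY mixxy cn_neq0.
- exact: q_convolution_eq0 recY recX mixyx cn_neq0.
Qed.

End CompositionSums.

Lemma qfactor_mix (R : comNzRingType) (a b q : R) i m :
  (a - b * q ^+ i) * (1 - q ^+ m) + (1 - q ^+ i) * (a * q ^+ m - b)
   = (a - b) * (1 - q ^+ (i + m)).
Proof. by rewrite exprD; ring. Qed.

Lemma blockA_rec (a b q : RF) i : 1 - q ^+ i.+1 != 0 ->
  blockA a b q i.+1 * (1 - q ^+ i.+1) = blockA a b q i * (a - b * q ^+ i).
Proof. by move=> nz; rewrite /blockA big_nat_recr //= subSS subn0 -mulrA mulfVK. Qed.

Lemma blockB_rec (a b q : RF) i : 1 - q ^+ i.+1 != 0 ->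
  blockB a b q i.+1 * (1 - q ^+ i.+1) = blockB a b q i * (a * q ^+ i - b).
Proof. by move=> nz; rewrite /blockB big_nat_recr //= subSS subn0 -mulrA mulfVK. Qed.

Lemma va_sub_vb_neq0 : va - vb != 0.
Proof.
rewrite /va /vb -rmorphB tofrac_eq0; apply/eqP => h.
have := congr1 (meval (fun i : 'I_3 => ((i : nat)%:R : rat))) h.
rewrite mevalB !mevalXU meval0 /= => /eqP.
by rewrite sub0r oppr_eq0 oner_eq0.
Qed.

Lemma one_sub_vqX_neq0 n : (0 < n)%N -> 1 - vq ^+ n != 0.
Proof.
move=> n_gt0.
have -> : 1 - vq ^+ n = tofrac (1 - ('X_(2 : 'I_3) : {mpoly rat[3]}) ^+ n).
  by rewrite rmorphB rmorph1 rmorphXn.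
rewrite tofrac_eq0.
apply/eqP => h; have := congr1 (mcoeff 0%MM) h.
rewrite mcoeffB mcoeff1 mcoeffXn mcoeff0 eqxx -mdeg_eq0 mdegMn mdeg1 mul1n.
by rewrite (gtn_eqF n_gt0) subr0 => /eqP; rewrite oner_eq0.
Qed.

Theorem mainTheorem14 (k : nat) (hk : (1 <= k)%N) :
  comp_sum (blockA va vb vq) k
    = \prod_(1 <= i < k.+1) ((va * vq ^+ (i - 1) - vb) / (1 - vq ^+ i))
  /\
  comp_sum (blockB va vb vq) k
    = \prod_(1 <= i < k.+1) ((va - vb * vq ^+ (i - 1)) / (1 - vq ^+ i)).
Proof.
have nz n : (0 < n <= k)%N -> (va - vb) * (1 - vq ^+ n) != 0.
  by case/andP=> n_gt0 _; exact: mulf_neq0 va_sub_vb_neq0 (one_sub_vqX_neq0 n_gt0).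
have recA i := blockA_rec va vb (one_sub_vqX_neq0 (ltn0Sn i)).
have recB i := blockB_rec va vb (one_sub_vqX_neq0 (ltn0Sn i)).
have blockA0 : blockA va vb vq 0 = 1 by rewrite /blockA big_geq.
have blockB0 : blockB va vb vq 0 = 1 by rewrite /blockB big_geq.
exact: composition_sum_q_dual hk blockA0 blockB0 recA recB (qfactor_mix va vb vq) nz.
Qed.
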